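(* Let $\mathcal{B}=(T,\bowtie,\ell)$ be a homogeneous block with $\ell\equiv 1$, and let $c:T\to\{1,\dots,k\}$ be a minimal proper vertex coloring of the conflict graph $(T,\bowtie)$ (so $k$ is its chromatic number), produced by any correct minimal vertex coloring algorithm. Then $\mathcal S=\mathrm{LevelSchedule}(c^{-1}(1),\dots,c^{-1}(k))$ is an optimal schedule of $\mathcal{B}$, i.e., $\mathcal S$ is valid and $\mathrm{Lt}_{\ell}(\mathcal S)=\mathrm{MinLt}_{\ell}(\mathcal{B})$.
   Context: A block consists of a finite set $T$ of transactions, a symmetric irreflexive conflict relation $\bowtie$, and a length function $\ell:T\to\mathbb{N}_{>0}$. A schedule is a set $\mathcal S\subseteq T\times T$ with $(T,\mathcal S)$ acyclic; it is valid if every conflicting pair is joined by a directed path in $(T,\mathcal S)$ in one direction or the other. $\mathrm{Lt}_\ell(\mathcal S)$ is the maximum over directed simple paths $P$ (including single vertices) of $\sum_{v\in P}\ell(v)$; $\mathrm{MinLt}_\ell(\mathcal{B})$ is its minimum over valid schedules. $\mathrm{LevelSchedule}(B_1,\dots,B_k)$ for an ordered partition of $T$ into conflict-free sets: set $B_0=\emptyset$, $\mathcal S=\emptyset$; for $i=1,\dots,k$ and, for each $i$, for $j=i-1,\dots,0$ (decreasing): let $E=\{(u,v)\in B_j\times B_i: u\bowtie v\}$, let $P$ be the set of pairs $(x,y)$ with a directed path from $x$ to $y$ in the current $(T,\mathcal S)$, and set $\mathcal S\leftarrow\mathcal S\cup(E\setminus P)$; output $\mathcal S$. *)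

From mathcomp Require Import all_boot.
Set Implicit Arguments. Unset Strict Implicit. Unset Printing Implicit Defensive.

Section Block.
Variable T : finType.
Variable conf : rel T.

Definition srel (S : {set T * T}) : rel T := fun x y => (x, y) \in S.

Definition acyclic (S : {set T * T}) : bool :=
  [forall x, forall y, ((x, y) \in S) ==> ~~ connect (srel S) y x].

Definition is_schedule (S : {set T * T}) : bool := acyclic S.

Definition valid (S : {set T * T}) : bool :=
  [forall u, forall v, conf u v ==> (connect (srel S) u v || connect (srel S) v u)].

(* Lt: max over directed simple paths x :: p (including single vertices)
   of the total length. A simple path has at most #|T| vertices. *)
Definition Lt (l : T -> nat) (S : {set T * T}) : nat :=
  \max_(n < #|T|) \max_(x : T)
     \max_(p : (n.-tuple T) | path (srel S) x p && uniq (x :: p))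
        (l x + \sum_(y <- p) l y).

(* MinLt: minimum of Lt over valid schedules.  The initial value
   \sum_x l x is an upper bound of Lt S for every S (simple paths), and
   valid schedules always exist, so this is the true minimum. *)
Definition MinLt (l : T -> nat) : nat :=
  \big[minn / (\sum_(x : T) l x)]_(S : {set T * T} | is_schedule S && valid S) Lt l S.

(* One inner step of LevelSchedule: add E \ P, P computed on the current S. *)
Definition level_step (S : {set T * T}) (Bj Bi : {set T}) : {set T * T} :=
  S :|: [set uv : T * T | [&& uv.1 \in Bj, uv.2 \in Bi, conf uv.1 uv.2
                             & ~~ connect (srel S) uv.1 uv.2]].

(* LevelSchedule(B_1,...,B_k), with Bs = [:: B_1; ...; B_k] and B_0 = set0. *)
Definition LevelSchedule (Bs : seq {set T}) : {set T * T} :=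
  let B := fun j => nth set0 (set0 :: Bs) j in
  foldl (fun S i =>
           foldl (fun S j => level_step S (B j) (B i)) S (rev (iota 0 i)))
        set0 (iota 1 (size Bs)).

(* proper vertex coloring with colors 'I_k (i.e. 1..k shifted to 0..k-1) *)
Definition proper_coloring (k : nat) (c : T -> 'I_k) : Prop :=
  forall x y, conf x y -> c x != c y.

Definition minimal_coloring (k : nat) (c : T -> 'I_k) : Prop :=
  proper_coloring c /\
  forall (k' : nat) (c' : T -> 'I_k'), proper_coloring c' -> k <= k'.

Definition color_classes (k : nat) (c : T -> 'I_k) : seq {set T} :=
  [seq [set x | c x == i] | i <- enum 'I_k].

End Block.

(* Every edge of the level schedule goes from a lower to a higher colour class,
   so the schedule is acyclic and a directed path meets each colour at most
   once: its latency is at most k.  A conflicting pair lies in two different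
   classes and is joined (by a new edge or an existing path) when the later
   class is processed, so the schedule is valid.  Conversely, in any valid
   schedule conflicting vertices are joined by a path, so the height of a
   vertex (the length of the longest simple path leaving it) is a proper
   colouring with fewer than Lt colours; minimality of k gives k <= Lt. *)

From HB Require Import structures.
From mathcomp Require Import all_boot zify.
Set Implicit Arguments. Unset Strict Implicit.

(* [bigD1] only needs a commutative semigroup law; [minn] has no unit in [nat]. *)
HB.instance Definition _ := SemiGroup.isComLaw.Build nat minn minnA minnC.

Section Schedules.
Variable T : finType.
Implicit Types (S : {set T * T}) (l : T -> nat).

Lemma connect_subset S S' : S \subset S' -> subrel (connect (srel S)) (connect (srel S')).
Proof. by move=> sSS'; apply: connect_sub => x y Sxy; apply/connect1/(subsetP sSS'). Qed.

Lemma acyclic_path_uniq S x p : acyclic S -> path (srel S) x p -> uniq (x :: p).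
Proof.
move=> /forallP acS; elim: p x => [|y p IHp] x // /andP[Sxy Syp].
rewrite cons_uniq IHp // andbT; apply/negP => /(path_connect Syp) Cyx.
by have /forallP/(_ y)/implyP/(_ Sxy) := acS x; rewrite Cyx.
Qed.

Lemma acyclic_of_rank S (f : T -> nat) :
  (forall x y, srel S x y -> f x < f y) -> acyclic S.
Proof.
move=> incr; have f_mono x p : path (srel S) x p -> f x <= f (last x p).
  elim: p x => [|y p IHp] x //= /andP[/incr lt_xy /IHp]; exact/leq_trans/ltnW.
apply/forallP => x; apply/forallP => y; apply/implyP => Sxy.
apply/negP => /connectP[p /f_mono + eq_x]; rewrite -eq_x.
by have := incr _ _ Sxy; lia.
Qed.

Lemma size_lt_card x (p : seq T) : uniq (x :: p) -> size p < #|T|.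
Proof. by move=> up; have := max_card (mem (x :: p)); rewrite (card_uniqP up). Qed.

Lemma Lt_ge_path l S x p :
  path (srel S) x p -> uniq (x :: p) -> l x + \sum_(y <- p) l y <= Lt l S.
Proof.
move=> Sxp up; pose n := Ordinal (size_lt_card up).
apply: (bigmax_sup n) => //; apply: (bigmax_sup x) => //.
by apply: (bigmax_sup (in_tuple p : n.-tuple T)) => //; exact/andP.
Qed.

Lemma Lt_le_paths l S m :
  (forall x p, path (srel S) x p -> uniq (x :: p) -> l x + \sum_(y <- p) l y <= m) ->
  Lt l S <= m.
Proof.
move=> bnd; apply/bigmax_leqP => n _; apply/bigmax_leqP => x _.
by apply/bigmax_leqP => p /andP[]; apply: bnd.
Qed.

Lemma Lt_le_sum l S : Lt l S <= \sum_x l x.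
Proof.
apply: Lt_le_paths => x p _ up.
have -> : l x + \sum_(y <- p) l y = \sum_(y <- x :: p) l y by rewrite big_cons.
rewrite big_uniq // [leqRHS](bigID (mem (x :: p))) /=.
exact: leq_addr.
Qed.

Lemma sum_unit_weight l (p : seq T) : (forall x, l x = 1) -> \sum_(y <- p) l y = size p.
Proof. by move=> l1; rewrite (eq_bigr (fun=> 1)) // sum1_size. Qed.

Lemma Lt_unit_le_rank l S k (f : T -> 'I_k) : (forall x, l x = 1) ->
  (forall x y, srel S x y -> f x < f y) -> Lt l S <= k.
Proof.
move=> l1 incr; apply: Lt_le_paths => x p Sxp _.
pose r y := nat_of_ord (f y).
rewrite l1 sum_unit_weight // add1n -[(size p).+1](size_map r (x :: p)).
have sorted_f : sorted ltn (map r (x :: p)).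
  by rewrite /= path_map; apply: sub_path Sxp => y z /incr.
rewrite -(size_iota 0 k) uniq_leq_size ?(sorted_uniq ltn_trans ltnn) //.
by move=> _ /mapP[y _ ->]; rewrite mem_iota /r ltn_ord.
Qed.

Definition height S x : nat :=
  \max_(n < #|T|) \max_(p : n.-tuple T | path (srel S) x p && uniq (x :: p)) n.

Lemma height_ge_path S x p : path (srel S) x p -> uniq (x :: p) -> size p <= height S x.
Proof.
move=> Sxp up; pose n := Ordinal (size_lt_card up).
apply: (bigmax_sup n) => //.
by apply: (bigmax_sup (in_tuple p : n.-tuple T)) => //; exact/andP.
Qed.

Lemma height_le_paths S x m :
  (forall p, path (srel S) x p -> uniq (x :: p) -> size p <= m) -> height S x <= m.
Proof.
move=> bnd; apply/bigmax_leqP => n _; apply/bigmax_leqP => p /andP[Sxp up].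
by rewrite -(size_tuple p) bnd.
Qed.

Lemma height_lt_Lt l S x : (forall x, l x = 1) -> height S x < Lt l S.
Proof.
move=> l1; have := @Lt_ge_path l S x [::] isT isT; rewrite big_nil l1 => Lt_gt0.
rewrite -(prednK Lt_gt0) ltnS; apply: height_le_paths => p Sxp up.
by have := Lt_ge_path l Sxp up; rewrite sum_unit_weight // l1; lia.
Qed.

Lemma height_connect S u v : acyclic S -> connect (srel S) u v -> u != v ->
  height S v < height S u.
Proof.
move=> acS /connectP[q Suq eq_v] neq_uv.
have ext p : path (srel S) v p -> (size p).+1 <= height S u.
  move=> Svp; have Suqp : path (srel S) u (q ++ p) by rewrite cat_path Suq -eq_v.
  have := height_ge_path Suqp (acyclic_path_uniq acS Suqp).
  case: q {Suq Suqp} eq_v => [/= eq_vu|y q _]; last by rewrite size_cat /=; lia.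
  by rewrite eq_vu eqxx in neq_uv.
rewrite -(prednK (ext [::] isT)) ltnS.
by apply: height_le_paths => p /ext; lia.
Qed.

Lemma chromatic_le_Lt (conf : rel T) l S k (c : T -> 'I_k) :
  irreflexive conf -> minimal_coloring conf c -> (forall x, l x = 1) ->
  is_schedule S -> valid conf S -> k <= Lt l S.
Proof.
move=> irr [_ c_min] l1 acS /forallP valS.
apply: (c_min _ (fun x => Ordinal (height_lt_Lt S x l1))) => x y Cxy.
have neq_xy : x != y by apply: contraTneq Cxy => ->; rewrite irr.
rewrite -val_eqE /=.
have /forallP/(_ y)/implyP/(_ Cxy)/orP[Sxy|Syx] := valS x.
  by rewrite eq_sym ltn_eqF // height_connect.
by rewrite ltn_eqF // height_connect // eq_sym.
Qed.

Lemma Lt_eq_MinLt (conf : rel T) l S : is_schedule S -> valid conf S ->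
  (forall S', is_schedule S' -> valid conf S' -> Lt l S <= Lt l S') ->
  Lt l S = MinLt conf l.
Proof.
move=> acS valS opt; apply/eqP; rewrite eqn_leq; apply/andP; split.
  apply: (big_ind (leq (Lt l S))); first exact: Lt_le_sum.
    by move=> m n; rewrite leq_min => -> ->.
  by move=> S' /andP[]; apply: opt.
by rewrite /MinLt (bigD1 S) ?acS ?valS //= geq_minl.
Qed.

End Schedules.

Section Folds.
Variables (A : finType) (B : eqType) (f : {set A} -> B -> {set A}).

Lemma foldl_inv (P : {set A} -> Prop) (X : {set A}) s :
  (forall Y b, b \in s -> P Y -> P (f Y b)) -> P X -> P (foldl f X s).
Proof.
elim: s X => [|b s IHs] X //= Pf PX; apply: IHs => [Y b' sb'|].
  exact/Pf/mem_behead.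
exact: Pf (mem_head _ _) PX.
Qed.

Hypothesis f_ext : forall (X : {set A}) b, X \subset f X b.

Lemma foldl_ext (X : {set A}) s : X \subset foldl f X s.
Proof. by elim: s X => [|b s IHs] X //=; apply: subset_trans (f_ext X b) (IHs _). Qed.

Lemma foldl_upclosed (Q : {set A} -> Prop) (X : {set A}) s b :
  (forall Y Z : {set A}, Y \subset Z -> Q Y -> Q Z) -> b \in s -> (forall Y, Q (f Y b)) ->
  Q (foldl f X s).
Proof.
move=> upQ /splitPr[s1 s2] Qb; rewrite foldl_cat /=.
exact: upQ (foldl_ext _ _) (Qb _).
Qed.

End Folds.

Section LevelScheduleColoring.
Variables (T : finType) (conf : rel T) (k : nat) (c : T -> 'I_k).

Local Notation B := (nth set0 (set0 :: color_classes c)).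
Local Notation S := (LevelSchedule conf (color_classes c)).

Lemma mem_color_class j x : (x \in B j) = (j == (c x).+1).
Proof.
case: j => [|j]; rewrite /= ?in_set0 // eqSS /color_classes.
have [lt_jk|le_kj] := ltnP j k; last first.
  rewrite nth_default ?inE; last by rewrite size_map -cardE card_ord.
  by apply/esym/negbTE; rewrite neq_ltn (leq_trans (ltn_ord _) le_kj) orbT.
rewrite (nth_map (c x)) ?size_enum_ord // inE -val_eqE /= nth_enum_ord // eq_sym.
Qed.

Lemma LevelSchedule_rank x y : srel S x y -> c x < c y.
Proof.
pose rank_incr (Y : {set T * T}) := forall x y, (x, y) \in Y -> c x < c y.
rewrite /srel /LevelSchedule; move: x y; apply: (foldl_inv (P := rank_incr)).
  move=> Y i _ rankY; apply: (foldl_inv (P := rank_incr)) => // Z j.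
  rewrite mem_rev mem_iota => /andP[_ lt_ji] rankZ x y.
  rewrite !inE /= => /orP[/rankZ //|/and4P[]].
  by rewrite !mem_color_class => /eqP <- /eqP Ei _ _; rewrite -ltnS -Ei.
by move=> x y; rewrite in_set0.
Qed.

Lemma LevelSchedule_connect u v : conf u v -> c u < c v -> connect (srel S) u v.
Proof.
move=> Cuv lt_uv; pose Q (Y : {set T * T}) := connect (srel Y) u v.
have upQ : forall Y Z : {set T * T}, Y \subset Z -> Q Y -> Q Z.
  by move=> Y Z /connect_subset; apply.
apply: (@foldl_upclosed _ _ _ _ Q _ _ (c v).+1) => //.
- by move=> Y i; apply: foldl_ext => Z j; apply: subsetUl.
- by rewrite size_map size_enum_ord mem_iota /=; have := ltn_ord (c v); lia.
move=> Y; apply: (@foldl_upclosed _ _ _ _ Q _ _ (c u).+1) => //.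
- by move=> Z j; apply: subsetUl.
- by rewrite mem_rev mem_iota.
move=> Z; have [CZuv|nCZuv] := boolP (connect (srel Z) u v).
  exact: upQ (subsetUl _ _) CZuv.
by apply: connect1; rewrite /srel in_setU in_set !mem_color_class !eqxx Cuv nCZuv orbT.
Qed.

Lemma LevelSchedule_valid : symmetric conf -> proper_coloring conf c -> valid conf S.
Proof.
move=> conf_sym c_proper; apply/forallP => u; apply/forallP => v; apply/implyP => Cuv.
have := c_proper _ _ Cuv; rewrite -val_eqE neq_ltn => /orP[lt_uv|lt_vu].
  by rewrite LevelSchedule_connect.
by rewrite (@LevelSchedule_connect v u) ?orbT // conf_sym.
Qed.

End LevelScheduleColoring.

Theorem corollary1 (T : finType) (conf : rel T) (l : T -> nat)
  (conf_sym : symmetric conf) (conf_irr : irreflexive conf)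
  (l_one : forall x, l x = 1)
  (k : nat) (c : T -> 'I_k) (c_min : minimal_coloring conf c) :
  let S := LevelSchedule conf (color_classes c) in
  [/\ is_schedule S, valid conf S & Lt l S = MinLt conf l].
Proof.
move=> S; have rankS := @LevelSchedule_rank T conf k c.
have schedS : is_schedule S by apply: (acyclic_of_rank (f := fun x => nat_of_ord (c x))).
have validS : valid conf S by apply: LevelSchedule_valid => //; case: c_min.
split=> //; apply: Lt_eq_MinLt => // S' schedS' validS'.
apply: leq_trans (Lt_unit_le_rank l_one rankS) _.
exact: chromatic_le_Lt conf_irr c_min l_one schedS' validS'.
Qed.
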